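(* Let $\mathcal{F}$ be a finite family of closed intervals on a line and let $G$ be its intersection graph. Then $\chi_{CF}^{cn}(G)\le 3$.
   Context: The intersection graph of $\mathcal{F}$ has vertex set $\mathcal{F}$, with distinct $s_1,s_2$ adjacent iff $s_1\cap s_2\neq\emptyset$. $\chi_{CF}^{cn}(G)$ is the minimum number of colors in a coloring of $V(G)$ such that for every vertex $v$, the closed neighborhood $N_G[v]=\{v\}\cup\{u:\{u,v\}\in E(G)\}$ contains a vertex whose color differs from the colors of all other vertices of $N_G[v]$. *)

From HB Require Import structures.
From mathcomp Require Import all_boot all_order all_algebra.
From Stdlib Require Import ClassicalEpsilon.
Set Implicit Arguments. Unset Strict Implicit. Unset Printing Implicit Defensive.
Import Order.TTheory GRing.Theory Num.Theory.
Local Open Scope ring_scope.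

Definition cinterval (R : realFieldType) (a b : R) : pred R :=
  fun x => (a <= x) && (x <= b).

Definition meets (R : realFieldType) (I J : pred R) : Prop :=
  exists x : R, x \in I /\ x \in J.

Definition interval_adj (R : realFieldType) (n : nat) (a b : 'I_n -> R)
  (i j : 'I_n) : Prop :=
  i <> j /\ meets (cinterval (a i) (b i)) (cinterval (a j) (b j)).

Definition closed_nbhd (T : finType) (adj : T -> T -> Prop) (v u : T) : Prop :=
  u = v \/ adj u v \/ adj v u.

Definition cf_cn_coloring (T : finType) (adj : T -> T -> Prop) (C : Type)
  (c : T -> C) : Prop :=
  forall v : T, exists u : T, closed_nbhd adj v u /\
    forall w : T, closed_nbhd adj v w -> w <> u -> c w <> c u.

Definition cf_cn_colorable (T : finType) (adj : T -> T -> Prop) (k : nat) : Prop :=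
  exists c : T -> 'I_k, cf_cn_coloring adj c.

Definition asbool (P : Prop) : bool :=
  if excluded_middle_informative P then true else false.

Lemma cf_cn_colorable_exists (T : finType) (adj : T -> T -> Prop) :
  exists k, asbool (cf_cn_colorable adj k).
Proof.
exists #|T|; rewrite /asbool; case: excluded_middle_informative => // [[]].
exists (@enum_rank T) => v; exists v; split; first by left.
by move=> w _ Hw /enum_rank_inj.
Qed.

Definition chi_cf_cn (T : finType) (adj : T -> T -> Prop) : nat :=
  ex_minn (@cf_cn_colorable_exists T adj).

From HB Require Import structures.
From mathcomp Require Import all_boot all_order all_algebra zify.
From Stdlib Require Import ClassicalEpsilon.
Import Order.TTheory GRing.Theory Num.Theory.
Local Open Scope ring_scope.
Set Implicit Arguments. Unset Strict Implicit. Unset Printing Implicit Defensive.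

(* A greedy sweep from left to right picks a chain J_0, J_1, ... of intervals:
   after J_i, let p be the least right endpoint among the intervals starting
   beyond b(J_i), and let J_(i+1) be the interval reaching furthest right among
   those starting at or before p.  Every interval meets some J_i, and an
   interval meeting J_k meets no J_j with j >= k + 3, and meets J_(k+1)
   whenever it meets J_(k+2).  Colour J_i with 1 + (i mod 2) and every other
   interval with 0: if k is the first index met by v, then J_(k+1) (when v
   meets it) or else J_k has a colour unique in the closed neighbourhood of v. *)

Lemma chi_cf_cn_leq (T : finType) (adj : T -> T -> Prop) (k : nat) :
  cf_cn_colorable adj k -> (chi_cf_cn adj <= k)%N.
Proof.
move=> colk; rewrite /chi_cf_cn; case: ex_minnP => m _; apply.
by rewrite /asbool; case: excluded_middle_informative.
Qed.

Lemma exists_strict_lower_bound (R : realFieldType) (T : finType) (f : T -> R) :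
  exists r, forall x, r < f x.
Proof.
have [x0 _ | T0] := pickP (fun _ : T => true); last by exists 0 => x; have := T0 x.
case: (@arg_minP _ _ _ x0 (fun=> true) f isT) => m _ minf.
exists (f m - 1) => x; apply: lt_le_trans (minf x isT).
by rewrite ltrBlDr ltrDl ltr01.
Qed.

Section IntervalChain.

Variables (R : realFieldType) (n : nat) (a b : 'I_n -> R).
Hypothesis hab : forall i, a i <= b i.

Definition overlap (i j : 'I_n) : bool := (a i <= b j) && (a j <= b i).

Lemma overlapC i j : overlap i j = overlap j i.
Proof. by rewrite /overlap andbC. Qed.

Lemma meets_overlap i j :
  meets (cinterval (a i) (b i)) (cinterval (a j) (b j)) <-> overlap i j.
Proof.
split=> [[x [/andP[aix xbi] /andP[ajx xbj]]] | /andP[aibj ajbi]].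
  by rewrite /overlap (le_trans aix xbj) (le_trans ajx xbi).
exists (Num.max (a i) (a j)); rewrite /in_mem /= /cinterval.
by rewrite !ge_max !le_max !lexx !hab aibj ajbi orbT.
Qed.

Lemma closed_nbhd_overlap v w :
  closed_nbhd (interval_adj a b) v w -> overlap v w.
Proof.
case=> [-> | [[_ /meets_overlap] | [_ /meets_overlap]]] //.
  by rewrite /overlap hab.
by rewrite overlapC.
Qed.

Lemma overlap_closed_nbhd v u :
  overlap v u -> closed_nbhd (interval_adj a b) v u.
Proof.
have [-> | neq_uv] := eqVneq u v; first by left.
by move=> /meets_overlap vu; right; right; split=> // eq_vu; rewrite eq_vu eqxx in neq_uv.
Qed.

Definition link (J K : 'I_n) : bool :=
  [&& a J < a K, b J < b K & [forall x, (a x <= b J) ==> (b x <= b K)]].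

Lemma link_gap J K M : link J K -> link K M -> b J < a M.
Proof.
case/and3P=> _ _ /forallP JK /and3P[_ bKM _].
rewrite ltNge; apply/negP => aMbJ.
by have := implyP (JK M) aMbJ; rewrite leNgt bKM.
Qed.

Lemma link_overlap_between J K M v :
  link J K -> link K M -> overlap v J -> overlap v M -> overlap v K.
Proof.
case/and3P=> _ bJK _ /and3P[aKM _ _] /andP[avbJ _] /andP[_ aMbv].
by rewrite /overlap (le_trans avbJ (ltW bJK)) (le_trans (ltW aKM) aMbv).
Qed.

Section SortedChain.

Variable L : seq 'I_n.
Hypothesis L_link : sorted link L.

Let L_b_lt : sorted (relpre b <%R) L.
Proof. by apply: sub_sorted L_link => J K /and3P[]. Qed.

Lemma chain_uniq : uniq L.
Proof.
apply: sorted_uniq L_b_lt; first by move=> J K M /= /lt_trans; apply.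
by move=> J /=; rewrite ltxx.
Qed.

Lemma chain_link x0 i : (i.+1 < size L)%N -> link (nth x0 L i) (nth x0 L i.+1).
Proof. by move: i; apply/sortedP. Qed.

Lemma chain_b_mono x0 i j :
  (i <= j)%N -> (j < size L)%N -> b (nth x0 L i) <= b (nth x0 L j).
Proof.
move=> le_ij ltjL; apply: (@sorted_leq_nth _ (relpre b <=%R)) => //=.
- by move=> J K M /= /le_trans; apply.
- by move=> J /=.
- by apply: sub_sorted L_b_lt => J K /= /ltW.
- by rewrite inE (leq_ltn_trans le_ij ltjL).
Qed.

Lemma chain_overlap_far v k j : overlap v (nth v L k) ->
  (k + 3 <= j)%N -> (j < size L)%N -> ~~ overlap v (nth v L j).
Proof.
move=> /andP[avbk _] le_kj ltjL.
have [i def_j] : exists i, j = i.+2 by exists (j - 2)%N; lia.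
have /and3P[_ _ /forallP link_k] := @chain_link v k ltac:(lia).
have bv_bk1 := implyP (link_k v) avbk.
have bk1_bi : b (nth v L k.+1) <= b (nth v L i) by apply: chain_b_mono; lia.
have bi_aj : b (nth v L i) < a (nth v L j).
  by rewrite def_j; apply: link_gap; apply: chain_link; lia.
rewrite /overlap negb_and -!ltNge orbC.
by rewrite (le_lt_trans bv_bk1 (le_lt_trans bk1_bi bi_aj)).
Qed.

Lemma chain_overlap_between v k : (k.+2 < size L)%N ->
  overlap v (nth v L k) -> overlap v (nth v L k.+2) -> overlap v (nth v L k.+1).
Proof. by move=> ltk2L; apply: link_overlap_between; apply: chain_link; lia. Qed.

Definition chain_colour (i : 'I_n) : 'I_3 :=
  inord (if i \in L then (index i L %% 2).+1 else 0).

Lemma chain_colour_eq u w : u \in L -> chain_colour w = chain_colour u ->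
  w \in L /\ (index w L %% 2 = index u L %% 2)%N.
Proof.
have colour_lt i : ((if i \in L then (index i L %% 2).+1 else 0) < 3)%N.
  by case: ifP => _; lia.
move=> uL /(congr1 val); rewrite /chain_colour /= !inordK // uL.
by case: ifP => // wL [].
Qed.

Lemma chain_colour_witness v k : (k < size L)%N -> overlap v (nth v L k) ->
  (forall j, (j < size L)%N -> overlap v (nth v L j) -> (j %% 2 = k %% 2)%N -> j = k) ->
  exists u, closed_nbhd (interval_adj a b) v u /\
    forall w, closed_nbhd (interval_adj a b) v w -> w <> u ->
      chain_colour w <> chain_colour u.
Proof.
move=> ltkL vk unique_k; exists (nth v L k); split; first exact: overlap_closed_nbhd.
move=> w /closed_nbhd_overlap vw neq_wu /chain_colour_eq[]; first exact: mem_nth.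
rewrite index_uniq ?chain_uniq // => wL par.
apply: neq_wu; rewrite -(nth_index v wL); congr nth.
by apply: unique_k; rewrite ?index_mem ?nth_index.
Qed.

Lemma chain_colouring_cf : (forall v, has (overlap v) L) ->
  cf_cn_coloring (interval_adj a b) chain_colour.
Proof.
move=> cover v; set k := find (overlap v) L.
have ltkL : (k < size L)%N by rewrite -has_find.
have vk : overlap v (nth v L k) := nth_find v (cover v).
have window j : (j < size L)%N -> overlap v (nth v L j) -> (k <= j <= k.+2)%N.
  move=> ltjL vj; apply/andP; split.
    by rewrite leqNgt; apply/negP => /(before_find v); rewrite vj.
  rewrite leqNgt; apply/negP => ltk2j.
  by rewrite (negbTE (chain_overlap_far vk _ ltjL)) in vj; lia.
have [/andP[ltk1L vk1] | nvk1] := boolP ((k.+1 < size L)%N && overlap v (nth v L k.+1)).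
  apply: (chain_colour_witness ltk1L vk1) => j ltjL vj par.
  by have := window j ltjL vj; lia.
apply: (chain_colour_witness ltkL vk) => j ltjL vj par.
have := window j ltjL vj; have [def_j | ] := eqVneq j k.+2; last by lia.
case/negP: nvk1; rewrite def_j in ltjL vj.
by rewrite (chain_overlap_between ltjL vk vj) andbT; lia.
Qed.

End SortedChain.

(* [greedy_step r J]: J is a possible next member of the chain once the sweep
   has passed the point r; p is the least right endpoint beyond r. *)
Definition greedy_step (r : R) (J : 'I_n) : Prop :=
  exists p, [/\ r < p, a J <= p <= b J,
    forall i, a i <= p -> b i <= b J & forall i, r < a i -> p <= b i].

Fixpoint greedy_chain (r : R) (L : seq 'I_n) : Prop :=
  if L is J :: L' then greedy_step r J /\ greedy_chain (b J) L'
  else forall i, a i <= r.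

Lemma greedy_step_exists r i0 : r < a i0 ->
  exists2 J, greedy_step r J & [set i | b J < a i] \proper [set i | r < a i].
Proof.
move=> ri0.
have [m rm minb] := @arg_minP _ _ _ i0 (fun i => r < a i) b ri0.
have [J aJm maxb] := @arg_maxP _ _ _ m (fun i => a i <= b m) b (hab m).
have bmJ : b m <= b J := maxb m (hab m).
have rbm : r < b m := lt_le_trans rm (hab m).
exists J; first by exists (b m); split; rewrite ?aJm.
apply/properP; split.
  by apply/subsetP => i; rewrite !inE; apply: lt_trans (lt_le_trans rbm bmJ).
by exists m; rewrite !inE // -leNgt (le_trans (hab m) bmJ).
Qed.

Lemma greedy_chain_exists r : exists L, greedy_chain r L.
Proof.
have [N] := ubnP #|[set i | r < a i]|; elim: N r => // N IH r.
rewrite ltnS => cardN.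
have [i0 ri0 | none_above] := pickP (fun i => r < a i); last first.
  by exists [::] => i; rewrite leNgt none_above.
have [J stepJ proper_J] := greedy_step_exists ri0.
have [L chainL] := IH (b J) (leq_trans (proper_card proper_J) cardN).
by exists (J :: L).
Qed.

Lemma greedy_chain_cover r L v : greedy_chain r L -> r < a v -> has (overlap v) L.
Proof.
elim: L r => [|J L IH] r /=; first by move=> below; rewrite ltNge below.
case=> [[p [_ /andP[aJp _] _ minb]] chainL] rv.
have [avbJ | bJav] := leP (a v) (b J).
  by rewrite /overlap avbJ (le_trans aJp (minb v rv)).
by rewrite (IH _ chainL bJav) orbT.
Qed.

Lemma greedy_step_link r J K : greedy_step r J -> greedy_step (b J) K -> link J K.
Proof.
move=> [p [_ /andP[aJp _] maxJ _]] [q [bJq /andP[_ qbK] maxK _]].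
have bJK : b J < b K := lt_le_trans bJq qbK.
have pK : p < a K by rewrite ltNge; apply/negP => /maxJ; rewrite leNgt bJK.
apply/and3P; split => //; first exact: le_lt_trans aJp pK.
by apply/forallP => x; apply/implyP => axbJ; apply: maxK; apply: le_trans axbJ (ltW bJq).
Qed.

Lemma greedy_chain_sorted r L : greedy_chain r L -> sorted link L.
Proof.
elim: L r => [|J [|K L] IH] r //= [stepJ chainK]; apply/andP; split.
  by case: chainK => stepK _; apply: greedy_step_link stepJ stepK.
exact: IH chainK.
Qed.

Lemma interval_chain_exists : exists L, sorted link L /\ forall v, has (overlap v) L.
Proof.
have [r below_a] := exists_strict_lower_bound a.
have [L chainL] := greedy_chain_exists r.
exists L; split=> [|v]; first exact: greedy_chain_sorted chainL.
exact: greedy_chain_cover chainL (below_a v).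
Qed.

End IntervalChain.

Theorem lemmaA1 (R : realFieldType) (n : nat) (a b : 'I_n -> R)
  (hab : forall i, a i <= b i)
  (hdistinct : forall i j, a i = a j -> b i = b j -> i = j) :
  (chi_cf_cn (@interval_adj R n a b) <= 3)%N.
Proof.
have [L [L_link L_cover]] := interval_chain_exists hab.
by apply: chi_cf_cn_leq; exists (chain_colour L); apply: chain_colouring_cf.
Qed.
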